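(* For all $L>0$, $\delta t>0$ and $J\ge2$ with $\delta t/\delta x^2\le1/2$, and all $\ell\in\{0,\dots,J-1\}$, $$|1+\delta t\,\lambda_\ell|\le \exp\Big(-\frac{\delta t}{\delta x^2}\sin^2\Big(\frac{\ell\pi}{J}\Big)\Big).$$
   Context: $\delta x=L/(J-1)$ and $\lambda_\ell=-\frac{4}{\delta x^2}\sin^2\big(\frac{\ell\pi}{2J}\big)$, $0\le\ell\le J-1$ (these are the eigenvalues of the Neumann finite-difference matrix $\mathsf P_\delta=\frac1{\delta x^2}\,\mathrm{tridiag}$ with diagonal $(-1,-2,\dots,-2,-1)$ and off-diagonals $1$). *)

From Stdlib Require Import Reals.
Open Scope R_scope.

Definition dx (L : R) (J : nat) : R := L / (INR J - 1).

(* Eigenvalues of the Neumann finite-difference matrix P_delta: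
   lambda_l = -(4 / dx^2) * sin^2 (l * PI / (2 J)). *)
Definition lambda (L : R) (J l : nat) : R :=
  - (4 / (dx L J) ^ 2) * (sin (INR l * PI / (2 * INR J))) ^ 2.

(* With r = dt / dx^2 and s = sin^2 (l pi / (2 J)) one has 1 + dt lambda_l = 1 - 4 r s and
   sin^2 (l pi / J) = 4 s (1 - s), so with a = 4 r s in [0, 2 s] the claim reads
   |1 - a| <= exp (- a (1 - s)).  The CFL condition a <= 2 s gives the polynomial bound
   |1 - a| <= 1 - a (1 - s), and 1 + x <= exp x finishes. *)
From Stdlib Require Import Reals Lra Psatz.
Open Scope R_scope.

Lemma Rabs_one_sub_le (a s : R) :
  0 <= s <= 1 -> 0 <= a <= 2 * s -> Rabs (1 - a) <= 1 - a * (1 - s).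
Proof.
intros Hs Ha; unfold Rabs; destruct (Rcase_abs (1 - a)); nra.
Qed.

Lemma Rabs_one_sub_le_exp (a s : R) :
  0 <= s <= 1 -> 0 <= a <= 2 * s -> Rabs (1 - a) <= exp (- a * (1 - s)).
Proof.
intros Hs Ha.
apply Rle_trans with (1 := Rabs_one_sub_le a s Hs Ha).
pose proof (exp_ineq1_le (- a * (1 - s))); lra.
Qed.

Lemma sin_sqr_bounds (x : R) : 0 <= sin x ^ 2 <= 1.
Proof.
pose proof (sin2_cos2 x); unfold Rsqr in *; nra.
Qed.

Lemma sin_2a_sqr (x : R) : sin (2 * x) ^ 2 = 4 * sin x ^ 2 * (1 - sin x ^ 2).
Proof.
rewrite sin_2a; pose proof (sin2_cos2 x); unfold Rsqr in *; nra.
Qed.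

Lemma dx_pos (L : R) (J : nat) : 0 < L -> (2 <= J)%nat -> 0 < dx L J.
Proof.
intros HL HJ; apply le_INR in HJ; simpl in HJ.
unfold dx; apply Rdiv_pos_pos; lra.
Qed.

Lemma one_add_mul_lambda (L dt : R) (J l : nat) :
  1 + dt * lambda L J l
  = 1 - 4 * (dt / dx L J ^ 2) * sin (INR l * PI / (2 * INR J)) ^ 2.
Proof.
unfold lambda, Rdiv; ring.
Qed.

Theorem proposition3p2 (L dt : R) (J l : nat) :
  0 < L -> 0 < dt -> (2 <= J)%nat ->
  dt / (dx L J) ^ 2 <= 1 / 2 ->
  (l <= J - 1)%nat ->
  Rabs (1 + dt * lambda L J l)
    <= exp (- (dt / (dx L J) ^ 2) * (sin (INR l * PI / INR J)) ^ 2).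
Proof.
intros HL Hdt HJ Hcfl _.
set (r := dt / dx L J ^ 2) in *.
set (th := INR l * PI / (2 * INR J)).
assert (Hr : 0 < r) by (apply Rdiv_pos_pos; [exact Hdt | apply pow_lt, dx_pos; assumption]).
assert (Hangle : INR l * PI / INR J = 2 * th).
{ apply le_INR in HJ; simpl in HJ; unfold th; field; lra. }
rewrite one_add_mul_lambda, Hangle, sin_2a_sqr; fold r th.
pose proof (sin_sqr_bounds th) as Hs.
replace (- r * (4 * sin th ^ 2 * (1 - sin th ^ 2)))
  with (- (4 * r * sin th ^ 2) * (1 - sin th ^ 2)) by ring.
apply Rabs_one_sub_le_exp; nra.
Qed.
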